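(* Let $n\ge2$, let $\mathbf{x}=(x_1,\dots,x_n)^T\in\mathbb{C}^n$ with $x_i\neq x_j$ for all $i\neq j$, and let $F$ and $A^{(k)}(\mathbf{x})$ be as in the context. Then for each $k\in\{1,\dots,n\}$ the matrix $M^{(k)}:=F'(\mathbf{x})^{-1}A^{(k)}(\mathbf{x})$ has entries \[ M^{(k)}_{jl}=\begin{cases} \dfrac{1}{x_k-x_j}, & j=l\neq k,\\[2ex] \dfrac{1}{x_l-x_k}, & j=k,\ l\neq k,\\[2ex] 0, & \text{otherwise (in particular } M^{(k)}_{kk}=0\text{)}. \end{cases} \]
   Context: Let $p(t)=t^n+a_{n-1}t^{n-1}+\dots+a_1t+a_0$ be a monic polynomial of degree $n$ with real coefficients, and set $\mathbf{a}=(a_0,a_1,\dots,a_{n-1})^T$. Define $V=(v_1,\dots,v_n)^T:\mathbb{C}^n\to\mathbb{C}^n$ by \[ v_{n-\nu+1}(\mathbf{x})=\sum_{i_1<i_2<\dots<i_\nu}(-x_{i_1})(-x_{i_2})\cdots(-x_{i_\nu}),\qquad \nu=1,\dots,n, \] (the sum running over all $\nu$-element index sets $\{i_1<\dots<i_\nu\}\subseteq\{1,\dots,n\}$), so that $\prod_{j=1}^n(t-x_j)=t^n+\sum_{j=0}^{n-1}v_{j+1}(\mathbf{x})t^j$. Define $F=(f_1,\dots,f_n)^T:\mathbb{C}^n\to\mathbb{C}^n$ by $F(\mathbf{x})=V(\mathbf{x})-\mathbf{a}$, with Jacobian $F'(\mathbf{x})$ (invertible when the $x_i$ are pairwise distinct).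 For $k=1,\dots,n$, $A^{(k)}(\mathbf{x})\in\mathbb{C}^{n\times n}$ is the matrix whose $(i,l)$ entry is $\partial^2 f_i(\mathbf{x})/\partial x_l\partial x_k$. *)

From HB Require Import structures.
From mathcomp Require Import all_boot all_order all_algebra.
From mathcomp Require Import complex.
From mathcomp Require Import reals.
From mathcomp Require Import mpoly.
Set Implicit Arguments. Unset Strict Implicit. Unset Printing Implicit Defensive.
Import Order.TTheory GRing.Theory Num.Theory.
Local Open Scope ring_scope.
Local Open Scope complex_scope.

(* The polynomial map V = (v_1,...,v_n) as polynomials in X_1..X_n (0-based
   index i : 'I_n stands for the paper's index i+1):
   v_{n-nu+1} = sum over nu-subsets {i_1<...<i_nu} of prod (-X_{i_j}).
   With 0-based index i, nu = n - i. *)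
Definition Vpoly (K : comNzRingType) (n : nat) (i : 'I_n) : {mpoly K[n]} :=
  \sum_(h : {set 'I_n} | #|h| == (n - i)%N) \prod_(j in h) (- 'X_j).

(* F = V - a, componentwise, with a_j (the coefficient of t^j) embedded as a
   constant polynomial; here a : 'I_n -> K with a i = a_{i} (0-based). *)
Definition Fpoly (K : comNzRingType) (n : nat) (a : 'I_n -> K) (i : 'I_n)
  : {mpoly K[n]} := Vpoly K i - (a i)%:MP.

Definition Jac (K : comNzRingType) (n : nat) (a : 'I_n -> K) (x : 'I_n -> K)
  : 'M[K]_n := \matrix_(i < n, l < n) ((Fpoly a i)^`M(l)).@[x].

Definition Ak (K : comNzRingType) (n : nat) (a : 'I_n -> K) (k : 'I_n)
  (x : 'I_n -> K) : 'M[K]_n :=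
  \matrix_(i < n, l < n) (((Fpoly a i)^`M(k))^`M(l)).@[x].

From HB Require Import structures.
From mathcomp Require Import all_boot all_order all_algebra.
From mathcomp Require Import complex reals mpoly.
Import Order.TTheory GRing.Theory Num.Theory.
Local Open Scope ring_scope.

(* Write v_0, ..., v_(n-1) for the polynomials Vpoly and, for a scalar u,
   consider the generating identity (Viete's formulas)
       sum_(i < n) u^i v_i + u^n = prod_j (u - X_j).
   The constants a_i of F disappear under differentiation, so the Jacobian
   and the matrices A^(k) only see the derivatives of the v_i.  Differentiating
   the identity once in X_l and once more in X_k gives
       sum_i u^i d_l v_i       = - prod_(j <> l) (u - X_j),
       sum_i u^i d_k d_l v_i   = [l <> k] prod_(j <> k, l) (u - X_j).
   Evaluating at X = x and u = x_j, the first identity says that the matrix L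
   whose row j is (x_j^i)_i / (- w_j), with the Lagrange weight
   w_j = prod_(m <> j) (x_j - x_m), is a left inverse of F'(x), hence equals
   F'(x)^-1.  The second identity then computes row j of L A^(k): it vanishes
   unless j is k or l, and otherwise one factor of w_j cancels against the
   product, leaving the claimed fractions. *)

Section VieteDerivatives.
Variables (K : comNzRingType) (n : nat).
Implicit Types (u : K) (x : 'I_n -> K).

Lemma mderivXU (j l : 'I_n) : ('X_j : {mpoly K[n]})^`M(l) = (j == l)%:R.
Proof.
rewrite mderivX mnm1E; case: eqP => [->|_]; last by rewrite scale0r.
by rewrite scale1r -{1}[U_(l)%MM]add0m addmK mpolyX0.
Qed.

Definition root_factor u (j : 'I_n) : {mpoly K[n]} := u%:MP - 'X_j.

Lemma mderiv_root_factor u j l : (root_factor u j)^`M(l) = - (j == l)%:R.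
Proof. by rewrite /root_factor mderivB mderivC mderivXU sub0r. Qed.

Lemma meval_prod_root_factor u (P : pred 'I_n) x :
  (\prod_(j | P j) root_factor u j).@[x] = \prod_(j | P j) (u - x j).
Proof.
rewrite rmorph_prod; apply: eq_bigr => j _.
by rewrite /root_factor raddfB /= mevalC mevalXU.
Qed.

Lemma mderiv_prod_root_factor_free u (P : pred 'I_n) l :
  (forall j, P j -> j != l) -> (\prod_(j | P j) root_factor u j)^`M(l) = 0.
Proof.
move=> Pl; apply: (big_ind (fun p : {mpoly K[n]} => p^`M(l) = 0)).
- by rewrite -mpolyC1 mderivC.
- by move=> p q dp dq; rewrite mderivM dp dq mul0r mulr0 addr0.
- by move=> j /Pl /negbTE jl; rewrite mderiv_root_factor jl oppr0.
Qed.

Lemma mderiv_prod_root_factor u (P : pred 'I_n) l :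
  (\prod_(j | P j) root_factor u j)^`M(l) =
  if P l then - \prod_(j | P j && (j != l)) root_factor u j else 0.
Proof.
case: ifP => Pl; last first.
  by apply: mderiv_prod_root_factor_free => j Pj; apply: contraFneq Pl => <-.
rewrite (bigD1 l) //= mderivM mderiv_root_factor eqxx mulN1r.
by rewrite mderiv_prod_root_factor_free ?mulr0 ?addr0 // => j /andP[].
Qed.

Definition Vpoly_ext (i : 'I_n.+1) : {mpoly K[n]} :=
  \sum_(h : {set 'I_n} | #|h| == (n - i)%N) \prod_(j in h) (- 'X_j).

Lemma Vpoly_ext_max : Vpoly_ext ord_max = 1.
Proof.
rewrite /Vpoly_ext subnn (big_pred1 set0) ?big_set0 // => h.
by rewrite cards_eq0.
Qed.

Lemma prod_root_factor_term u (h : {set 'I_n}) :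
  \prod_j (if j \in h then - 'X_j else u%:MP) =
  u ^+ (n - #|h|) *: \prod_(j in h) (- 'X_j : {mpoly K[n]}).
Proof.
rewrite (bigID (mem h)) /= (eq_bigr (fun j => - 'X_j)) => [|j /= ->//].
rewrite (eq_bigr (fun _ => u%:MP)) => [|j /negbTE ->//].
rewrite prodr_const -rmorphXn mulrC mul_mpolyC; congr (_ ^+ _ *: _).
transitivity #|~: h|; first by apply: eq_card => j; rewrite inE.
by rewrite cardsCs setCK card_ord.
Qed.

Lemma prod_root_factor_expand u :
  \prod_(j < n) root_factor u j = \sum_(i < n.+1) u ^+ i *: Vpoly_ext i.
Proof.
rewrite (eq_bigr (fun j => - 'X_j + u%:MP)) => [|j _]; last by rewrite addrC.
rewrite bigA_distr /= (eq_bigr _ (fun h _ => prod_root_factor_term u h)).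
rewrite (partition_big (fun h : {set 'I_n} => inord (n - #|h|) : 'I_n.+1)
                       xpredT) //=.
apply: eq_bigr => i _; rewrite scaler_sumr; apply: eq_big => [h|h /eqP <-].
  have hn : (#|h| <= n)%N by rewrite -[X in (_ <= X)%N]card_ord max_card.
  have iS : (i <= n)%N := ltn_ord i.
  apply/eqP/eqP => [<-|->]; first by rewrite inordK ?ltnS ?leq_subr // subKn.
  by apply/val_inj; rewrite /= inordK ?ltnS ?leq_subr // subKn.
by rewrite inordK // ltnS leq_subr.
Qed.

Lemma Vpoly_mderiv_gen u l :
  \sum_(i < n) u ^+ i *: (Vpoly K i)^`M(l) =
  - \prod_(j | j != l) root_factor u j.
Proof.
have := congr1 (mderiv l) (prod_root_factor_expand u).
rewrite (mderiv_prod_root_factor u xpredT) raddf_sum big_ord_recr /=.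
rewrite Vpoly_ext_max mderivZ -mpolyC1 mderivC scaler0 addr0 => ->.
by apply: eq_bigr => i _; rewrite mderivZ.
Qed.

Lemma Vpoly_mderiv2_gen u k l :
  \sum_(i < n) u ^+ i *: ((Vpoly K i)^`M(k))^`M(l) =
  if l == k then 0 else \prod_(j | (j != k) && (j != l)) root_factor u j.
Proof.
have := congr1 (mderiv l) (Vpoly_mderiv_gen u k).
rewrite mderivN (mderiv_prod_root_factor u (fun j => j != k)) raddf_sum /=.
rewrite (eq_bigr (fun i : 'I_n => u ^+ i *: ((Vpoly K i)^`M(k))^`M(l))).
  by move=> ->; case: eqP => _; rewrite ?oppr0 ?opprK.
by move=> i _; rewrite mderivZ.
Qed.

Lemma Vpoly_mderiv_gen_eval u l x :
  \sum_(i < n) u ^+ i * ((Vpoly K i)^`M(l)).@[x] =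
  - \prod_(j | j != l) (u - x j).
Proof.
have := congr1 (meval x) (Vpoly_mderiv_gen u l).
rewrite raddf_sum /= mevalN meval_prod_root_factor => <-.
by apply: eq_bigr => i _; rewrite mevalZ.
Qed.

Lemma Vpoly_mderiv2_gen_eval u k l x :
  \sum_(i < n) u ^+ i * (((Vpoly K i)^`M(k))^`M(l)).@[x] =
  if l == k then 0 else \prod_(j | (j != k) && (j != l)) (u - x j).
Proof.
have := congr1 (meval x) (Vpoly_mderiv2_gen u k l).
rewrite raddf_sum /=.
rewrite (eq_bigr (fun i : 'I_n => u ^+ i * (((Vpoly K i)^`M(k))^`M(l)).@[x])).
  by move=> ->; case: eqP => _; rewrite ?meval0 ?meval_prod_root_factor.
by move=> i _; rewrite mevalZ.
Qed.

Lemma JacE (a x : 'I_n -> K) i l : Jac a x i l = ((Vpoly K i)^`M(l)).@[x].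
Proof. by rewrite mxE /Fpoly mderivB mderivC subr0. Qed.

Lemma AkE (a : 'I_n -> K) k x i l :
  Ak a k x i l = (((Vpoly K i)^`M(k))^`M(l)).@[x].
Proof. by rewrite mxE /Fpoly mderivB mderivC subr0. Qed.

End VieteDerivatives.

Section LagrangeInverse.
Variables (K : fieldType) (n : nat) (x : 'I_n -> K).
Hypothesis x_inj : forall i j : 'I_n, i != j -> x i != x j.

Lemma prod_diff_neq0 j (P : pred 'I_n) :
  (forall i, P i -> i != j) -> \prod_(i | P i) (x j - x i) != 0.
Proof.
move=> Pj; apply/prodf_neq0 => i /Pj ij.
by rewrite subr_eq0 x_inj // eq_sym.
Qed.

Definition lagrange_weight j := \prod_(m | m != j) (x j - x m).

Lemma lagrange_weight_split j m : m != j ->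
  lagrange_weight j =
  (x j - x m) * \prod_(i | (i != j) && (i != m)) (x j - x i).
Proof. by move=> mj; rewrite /lagrange_weight (bigD1 m). Qed.

Lemma lagrange_weight_cancel j m : m != j ->
  (- lagrange_weight j)^-1 * \prod_(i | (i != j) && (i != m)) (x j - x i) =
  (x m - x j)^-1.
Proof.
move=> mj; rewrite (lagrange_weight_split _ _ mj) invrN invfM mulNr -mulrA.
rewrite mulVf.
  by rewrite mulr1 -invrN opprB.
by apply: prod_diff_neq0 => i /andP[].
Qed.

Definition lagrange_mx : 'M[K]_n :=
  \matrix_(j, i) ((- lagrange_weight j)^-1 * x j ^+ i).

Lemma lagrange_mxE (B : 'M[K]_n) j l :
  (lagrange_mx *m B) j l =
  (- lagrange_weight j)^-1 * \sum_(i < n) x j ^+ i * B i l.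
Proof. by rewrite mxE mulr_sumr; apply: eq_bigr => i _; rewrite mxE mulrA. Qed.

Lemma lagrange_mx_Jac (a : 'I_n -> K) : lagrange_mx *m Jac a x = 1%:M.
Proof.
apply/matrixP => j l; rewrite lagrange_mxE mxE.
under eq_bigr do rewrite JacE.
rewrite Vpoly_mderiv_gen_eval; case: eqP => [->|/eqP jl].
  by rewrite -/(lagrange_weight l) mulVf // oppr_eq0 prod_diff_neq0.
by rewrite (bigD1 j jl) /= subrr mul0r oppr0 mulr0.
Qed.

Lemma invmx_Jac (a : 'I_n -> K) : invmx (Jac a x) = lagrange_mx.
Proof.
have [_ Ju] := mulmx1_unit (lagrange_mx_Jac a).
by rewrite -[invmx _]mul1mx -(lagrange_mx_Jac a) -mulmxA mulmxV // mulmx1.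
Qed.

Lemma invmx_Jac_Ak (a : 'I_n -> K) k j l :
  (invmx (Jac a x) *m Ak a k x) j l =
  if l == k then 0
  else (- lagrange_weight j)^-1 *
       \prod_(i | (i != k) && (i != l)) (x j - x i).
Proof.
rewrite invmx_Jac lagrange_mxE.
under [in LHS]eq_bigr do rewrite AkE.
by rewrite Vpoly_mderiv2_gen_eval; case: eqP; rewrite ?mulr0.
Qed.

Lemma invmx_Jac_Ak_entry (a : 'I_n -> K) k j l :
  (invmx (Jac a x) *m Ak a k x) j l =
  (if (j == l) && (j != k) then (x k - x j)^-1
   else if (j == k) && (l != k) then (x l - x k)^-1
   else 0).
Proof.
rewrite invmx_Jac_Ak.
have [->|lk] := eqVneq l k; first by rewrite andbN; case: (j == k).
have [->|jl] := eqVneq j l.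
  rewrite lk (eq_bigl (fun i => (i != l) && (i != k))) => [|i].
    by rewrite lagrange_weight_cancel // eq_sym.
  exact: andbC.
have [->|jk] := eqVneq j k; first by rewrite lagrange_weight_cancel.
by rewrite (bigD1 j) ?jk ?jl //= subrr mul0r mulr0.
Qed.

End LagrangeInverse.

Local Open Scope complex_scope.

Theorem mainTheorem5 (R : realType) (n : nat) (a : 'I_n -> R)
  (x : 'I_n -> R[i]) :
  (2 <= n)%N ->
  (forall i j : 'I_n, i != j -> x i != x j) ->
  forall k j l : 'I_n,
    (invmx (Jac (fun i => (a i)%:C) x) *m Ak (fun i => (a i)%:C) k x) j l =
    (if (j == l) && (j != k) then (x k - x j)^-1
     else if (j == k) && (l != k) then (x l - x k)^-1
     else 0).
Proof.
by move=> _ x_inj k j l; apply: (@invmx_Jac_Ak_entry _ _ _ x_inj).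
Qed.
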